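(* Let $f \colon \mathbb{R}^n \to \mathbb{R}$ and $g \colon \mathbb{R}^n \to \mathbb{R}^m$ be continuously differentiable, let $X \subseteq \mathbb{R}^m$ be nonempty and closed, let $\rho>0$, and let $p^\rho(y) = \sum_{i=1}^n p_i^\rho(y_i)$ where each $p_i^\rho$ satisfies (P.1)–(P.3) below. Let $(x^*,y^* )$ be a stationary point of (SPOref) in the sense defined below. Then there exists $\alpha^*>0$ such that $(x^*,y^* )$ is a stationary point of Pen$(\alpha)$ (in the sense defined below) for all $\alpha\ge\alpha^*$.
   Context: Conditions on each $p_i^\rho\colon\mathbb{R}\to\mathbb{R}$: (P.1) convex with a unique minimizer $s_i^\rho>0$; (P.2) $p_i^\rho(0)-p_i^\rho(s_i^\rho)=\rho$; (P.3) continuously differentiable. Notation: $I_0(z)=\{i : z_i=0\}$, $|x| = (|x_1|,\dots,|x_n|)^T$, $\circ$ the componentwise product, $e_i$ the $i$-th unit vector, $g'(x)$ the Jacobian of $g$, $N^{\lim}_X$ the limiting (Mordukhovich) normal cone to $X$ (the outer limit of Fréchet normal cones, where the Fréchet normal cone is the polar of the Bouligand tangent cone). (SPOref) is $\min_{x,y} f(x)+p^\rho(y)$ s.t. $g(x)\in X$, $x\circ y=0$, $y\ge0$. A feasible point $(x^*,y^* )$ of (SPOref) is stationary if there exist $\lambda^*\in N^{\lim}_X(g(x^* ))$, reals $\gamma_i^x$ ($i\in I_0(x^* )$), $\gamma_i^y$ and $\nu_i^*\ge 0$ ($i\in I_0(y^* )$) with $0 = \nabla f(x^* ) + g'(x^*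 )^T\lambda^* + \sum_{i\in I_0(x^* )} \gamma_i^x y_i^* e_i$ and $0 = \nabla p^\rho(y^* ) + \sum_{i\in I_0(y^* )}(\gamma_i^y x_i^* - \nu_i^* ) e_i$. Pen$(\alpha)$ is $\min_{x,y} f(x)+p^\rho(y)+\alpha|x|^Ty$ s.t. $g(x)\in X$, $y\ge 0$. A point $(x^*,y^* )$ is stationary for Pen$(\alpha)$ if $g(x^* )\in X$, $y^*\ge0$, and there exist $\lambda\in N^{\lim}_X(g(x^* ))$ and $\gamma_i\ge 0$ ($i\in I_0(y^* )$) such that $0\in \nabla f(x^* ) + \alpha\, y^*\circ\partial(|x^*|) + g'(x^* )^T\lambda$ and $0 = \nabla p^\rho(y^* ) + \alpha|x^*| - \sum_{i\in I_0(y^* )}\gamma_i e_i$, where $y^*\circ\partial(|x^*|) = \{y^*\circ s : s_i = \operatorname{sign}(x_i^* ) \text{ if } x_i^*\ne0,\ s_i\in[-1,1] \text{ if } x_i^*=0\}$. *)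

From HB Require Import structures.
From mathcomp Require Import all_boot all_order all_algebra.
From mathcomp Require Import all_classical all_reals all_analysis.
Set Implicit Arguments. Unset Strict Implicit. Unset Printing Implicit Defensive.
Import Order.TTheory GRing.Theory Num.Theory.
Import numFieldNormedType.Exports.
Local Open Scope classical_set_scope.
Local Open Scope ring_scope.

Section Defs.
Variable R : realType.

Definition unitv (n : nat) (i : 'I_n) : 'rV[R]_n := \row_j (if j == i then 1 else 0).

Definition dotv (n : nat) (u v : 'rV[R]_n) : R := \sum_i u 0 i * v 0 i.

Definition absv (n : nat) (x : 'rV[R]_n) : 'rV[R]_n := \row_i `|x 0 i|.
Definition cprod (n : nat) (x y : 'rV[R]_n) : 'rV[R]_n := \row_i (x 0 i * y 0 i).

Definition C1 (n k : nat) (h : 'rV[R]_n -> 'rV[R]_k) : Prop :=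
  (forall x, differentiable h x) /\
  (forall j : 'I_n, continuous (fun x => 'd h x (unitv j))).

Definition C1s (n : nat) (f : 'rV[R]_n -> R) : Prop :=
  (forall x, differentiable f x) /\
  (forall j : 'I_n, continuous (fun x => 'd f x (unitv j))).

Definition grad (n : nat) (f : 'rV[R]_n -> R) (x : 'rV[R]_n) : 'rV[R]_n :=
  \row_j ('d f x (unitv j)).

(* g'(x)^T lam for g : R^n -> R^m, lam in R^m *)
Definition jacT (n m : nat) (g : 'rV[R]_n -> 'rV[R]_m) (x : 'rV[R]_n)
  (lam : 'rV[R]_m) : 'rV[R]_n :=
  \row_j (dotv lam ('d g x (unitv j))).

Definition tangent_cone (m : nat) (X : set 'rV[R]_m) (z : 'rV[R]_m) : set 'rV[R]_m :=
  [set d | exists (t : nat -> R) (dk : nat -> 'rV[R]_m),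
     (forall k, 0 < t k) /\ t @ \oo --> (0 : R) /\ dk @ \oo --> d /\
     (forall k, X (z + t k *: dk k))].

Definition frechet_normal (m : nat) (X : set 'rV[R]_m) (z : 'rV[R]_m) : set 'rV[R]_m :=
  [set v | forall d, tangent_cone X z d -> dotv v d <= 0].

Definition limiting_normal (m : nat) (X : set 'rV[R]_m) (z : 'rV[R]_m) : set 'rV[R]_m :=
  [set v | exists (zk vk : nat -> 'rV[R]_m),
     (forall k, X (zk k)) /\ zk @ \oo --> z /\ vk @ \oo --> v /\
     (forall k, frechet_normal X (zk k) (vk k))].

Definition convex_fun (p : R -> R) : Prop :=
  forall (a b t : R), 0 <= t <= 1 -> p (t * a + (1 - t) * b) <= t * p a + (1 - t) * p b.

(* (P.1)-(P.3) *)
Definition admissible_p (rho : R) (p : R -> R) : Prop :=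
  convex_fun p /\
  (exists s : R, 0 < s /\ (forall t, p s <= p t) /\
     (forall s', (forall t, p s' <= p t) -> s' = s) /\
     p 0 - p s = rho) /\
  (forall t, derivable p t 1) /\ continuous (derive1 p).

Definition psum (n : nat) (p : 'I_n -> R -> R) (y : 'rV[R]_n) : R := \sum_i p i (y 0 i).
Definition gradp (n : nat) (p : 'I_n -> R -> R) (y : 'rV[R]_n) : 'rV[R]_n :=
  \row_i (derive1 (p i) (y 0 i)).

Definition SPOref_stationary (n m : nat) (f : 'rV[R]_n -> R)
  (g : 'rV[R]_n -> 'rV[R]_m) (X : set 'rV[R]_m) (p : 'I_n -> R -> R)
  (x y : 'rV[R]_n) : Prop :=
  X (g x) /\ cprod x y = 0 /\ (forall i, 0 <= y 0 i) /\
  exists (lam : 'rV[R]_m) (gx gy nu : 'I_n -> R),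
    limiting_normal X (g x) lam /\
    (forall i, y 0 i = 0 -> 0 <= nu i) /\
    grad f x + jacT g x lam
      + \sum_(i | x 0 i == 0) (gx i * y 0 i) *: unitv i = 0 /\
    gradp p y + \sum_(i | y 0 i == 0) (gy i * x 0 i - nu i) *: unitv i = 0.

Definition Pen_stationary (n m : nat) (f : 'rV[R]_n -> R)
  (g : 'rV[R]_n -> 'rV[R]_m) (X : set 'rV[R]_m) (p : 'I_n -> R -> R)
  (alpha : R) (x y : 'rV[R]_n) : Prop :=
  X (g x) /\ (forall i, 0 <= y 0 i) /\
  exists (lam : 'rV[R]_m) (gam : 'I_n -> R),
    limiting_normal X (g x) lam /\
    (forall i, y 0 i = 0 -> 0 <= gam i) /\
    (exists s : 'rV[R]_n,
       (forall i, x 0 i != 0 -> s 0 i = Num.sg (x 0 i)) /\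
       (forall i, x 0 i = 0 -> -1 <= s 0 i <= 1) /\
       grad f x + alpha *: cprod y s + jacT g x lam = 0) /\
    gradp p y + alpha *: absv x - \sum_(i | y 0 i == 0) gam i *: unitv i = 0.

End Defs.

(* The multipliers of Pen(alpha) are read off those of (SPOref).
   Complementarity x_i y_i = 0 splits the indices.  Where x_i = 0, the
   subgradient entry s_i := gx_i / alpha reproduces the term gx_i y_i, and it
   lies in [-1, 1] once alpha >= |gx_i|.  Where x_i <> 0, y_i = 0 and both
   terms vanish.  The multiplier of y_i >= 0 is gamma_i := p_i'(y_i) + alpha |x_i|,
   which makes the y-equation hold identically; its sign only matters where
   y_i = 0: if also x_i = 0 then gamma_i = nu_i >= 0, and otherwise
   gamma_i >= 0 as soon as alpha |x_i| >= |p_i'(0)|.  Finitely many such lower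
   bounds on alpha give alpha^*. *)

From HB Require Import structures.
From mathcomp Require Import all_boot all_order all_algebra.
From mathcomp Require Import all_classical all_reals all_analysis.
From mathcomp Require Import lra.
Import Order.TTheory GRing.Theory Num.Theory.
Import numFieldNormedType.Exports.
Local Open Scope classical_set_scope.
Local Open Scope ring_scope.

Lemma exists_pos_ub {R : realDomainType} {n : nat} (F : 'I_n -> R) :
  exists2 a : R, 0 < a & forall i, F i <= a.
Proof.
exists (1 + \sum_i `|F i|) => [|i].
  by rewrite ltr_wpDr ?ltr01 // sumr_ge0.
rewrite (le_trans (ler_norm _)) // (bigD1 i) //= addrCA lerDl.
by rewrite addr_ge0 ?ler01 ?sumr_ge0.
Qed.

Section PenaltyMultipliers.
Context {R : realType} {n : nat}.
Implicit Types (x y a d : 'rV[R]_n) (c gx gy nu : 'I_n -> R) (alpha : R).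

Lemma sum_unitvE (P : pred 'I_n) c j :
  (\sum_(i | P i) c i *: unitv R i) 0 j = if P j then c j else 0.
Proof.
rewrite summxE; under eq_bigr => i _ do rewrite !mxE.
case: ifP => Pj.
  rewrite (bigD1 j) //= eqxx mulr1 big1 ?addr0 // => i /andP[_ /negbTE].
  by rewrite eq_sym => ->; rewrite mulr0.
rewrite big1 // => i Pi; case: eqP => [ji|]; last by rewrite mulr0.
by move: Pi; rewrite -ji Pj.
Qed.

Lemma cprodC x y : cprod x y = cprod y x.
Proof. by apply/rowP => i; rewrite !mxE mulrC. Qed.

Lemma cprod_eq0_compl {x y i} :
  cprod x y = 0 -> x 0 i != 0 -> y 0 i = 0.
Proof.
move=> /rowP/(_ i) xy0 xi; apply/eqP.
by move: xy0; rewrite !mxE => /eqP; rewrite mulf_eq0 (negbTE xi).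
Qed.

Definition pen_subgrad x gx alpha : 'rV[R]_n :=
  \row_i (if x 0 i != 0 then Num.sg (x 0 i) else gx i / alpha).

Definition pen_mult x d alpha (i : 'I_n) : R := d 0 i + alpha * `|x 0 i|.

Lemma pen_subgrad_sg x gx alpha i :
  x 0 i != 0 -> pen_subgrad x gx alpha 0 i = Num.sg (x 0 i).
Proof. by move=> xi; rewrite mxE xi. Qed.

Lemma pen_subgrad_bound x gx alpha i :
  0 < alpha -> `|gx i| <= alpha -> x 0 i = 0 ->
  -1 <= pen_subgrad x gx alpha 0 i <= 1.
Proof.
move=> apos gxa xi; rewrite mxE xi eqxx /= -ler_norml normrM normfV.
by rewrite (gtr0_norm apos) ler_pdivrMr // mul1r.
Qed.

Lemma pen_x_equation {a x y gx alpha} :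
  alpha != 0 -> cprod x y = 0 ->
  a + \sum_(i | x 0 i == 0) (gx i * y 0 i) *: unitv R i = 0 ->
  a + alpha *: cprod y (pen_subgrad x gx alpha) = 0.
Proof.
move=> a0 xy0 /rowP E; apply/rowP => j; have := E j.
rewrite !mxE sum_unitvE.
have [xj|xj] := eqVneq (x 0 j) 0.
  by rewrite /= mulrCA [gx j / _]mulrC mulVKf // mulrC.
by rewrite (cprod_eq0_compl xy0 xj) !mul0r mulr0.
Qed.

Lemma pen_y_equation {d x y gy nu} alpha :
  cprod x y = 0 ->
  d + \sum_(i | y 0 i == 0) (gy i * x 0 i - nu i) *: unitv R i = 0 ->
  d + alpha *: absv x - \sum_(i | y 0 i == 0) pen_mult x d alpha i *: unitv R i = 0.
Proof.
move=> xy0 /rowP E; apply/rowP => j; have := E j.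
rewrite !mxE !sum_unitvE /pen_mult.
have [yj|yj] := eqVneq (y 0 j) 0; first by rewrite /= subrr.
have xj : x 0 j = 0.
  by apply: cprod_eq0_compl yj; rewrite cprodC.
by rewrite xj normr0 mulr0 !addr0 subr0.
Qed.

Lemma pen_mult_ge0 {d x y gy nu alpha i} :
  d + \sum_(i | y 0 i == 0) (gy i * x 0 i - nu i) *: unitv R i = 0 ->
  (y 0 i = 0 -> 0 <= nu i) -> (x 0 i != 0 -> `|d 0 i| <= alpha * `|x 0 i|) ->
  y 0 i = 0 -> 0 <= pen_mult x d alpha i.
Proof.
move=> /rowP E nu0 dbound yi; rewrite /pen_mult.
have [xi|xi] := eqVneq (x 0 i) 0.
  have := E i; rewrite !mxE sum_unitvE yi eqxx xi mulr0 normr0.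
  have := nu0 yi; lra.
have := ler_norm (- d 0 i); rewrite normrN; have := dbound xi; lra.
Qed.

End PenaltyMultipliers.

Theorem mainTheorem3 (R : realType) (n m : nat)
  (f : 'rV[R]_n -> R) (g : 'rV[R]_n -> 'rV[R]_m) (X : set 'rV[R]_m)
  (rho : R) (p : 'I_n -> R -> R) (x y : 'rV[R]_n) :
  C1s f -> C1 g -> X !=set0 -> closed X -> 0 < rho ->
  (forall i, admissible_p rho (p i)) ->
  SPOref_stationary f g X p x y ->
  exists alpha0 : R, 0 < alpha0 /\
    forall alpha : R, alpha0 <= alpha -> Pen_stationary f g X p alpha x y.
Proof.
move=> _ _ _ _ _ _ [Xg [xy0 [y0 [lam [gx [gy [nu [Hlam [Hnu [E1 E2]]]]]]]]]].
set d := gradp p y.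
(* Where x_i = 0 the quotient below is the junk value 0; it is only used where x_i <> 0. *)
have [alpha0 a0pos a0ub] :=
  exists_pos_ub (fun i => Num.max `|gx i| (`|d 0 i| / `|x 0 i|)).
exists alpha0; split=> // alpha a0a.
have apos : 0 < alpha by apply: lt_le_trans a0a.
have bounds i : `|gx i| <= alpha /\ `|d 0 i| / `|x 0 i| <= alpha.
  by have /le_trans/(_ a0a) := a0ub i; rewrite ge_max => /andP[].
split=> //; split=> //.
exists lam, (pen_mult x d alpha); split=> //; split.
  move=> i; apply: (pen_mult_ge0 E2 (Hnu i)) => xi.
  by rewrite -ler_pdivrMr ?normr_gt0 //; case: (bounds i).
split; last exact: pen_y_equation alpha xy0 E2.
exists (pen_subgrad x gx alpha); split; first exact: pen_subgrad_sg.
split; first by move=> i; apply: pen_subgrad_bound => //; case: (bounds i).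
by rewrite addrAC pen_x_equation ?gt_eqF // addrC.
Qed.
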